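(* Let $\nu\ge1$, $\Psi\neq\emptyset$, $n\in\mathbb N$, and let $W_1,\dots,W_n:\Omega\to\ell^\infty(\Psi)$ be arbitrary (not necessarily measurable) maps on a probability space $(\Omega,\Upsilon,P)$. For $1\le i\le j\le n$ and $\psi\in\Psi$ let $S^W_{i,j}(\psi)=\sum_{k=i}^jW_k(\psi)$ and $M^W_{i,j}(\psi)=\max_{k=i,\dots,j}|S^W_{i,k}(\psi)|$. Suppose there exist $\alpha>1$ and $g:\{1,\dots,n\}^2\to\mathbb R$ such that $\mathrm E^*\{\sup_{\psi\in\Psi}|S^W_{i,j}(\psi)|^\nu\}\le g^\alpha(i,j)$ for all $1\le i\le j\le n$, and (i') $g(i,j)\ge0$ for all $(i,j)\in\{1,\dots,n\}^2$; (ii') $g(i,j)\le g(i,j+1)$ for all $1\le i\le j\le n-1$; (iii') $g(i,j)+g(j+1,k)\le Q\,g(i,k)$ for all $1\le i\le j<k\le n$, for some $Q\in[1,2^{(\alpha-1)/\alpha})$. Then there exists a constant $A$ depending only on $\alpha,\nu,Q$ such that $$\mathrm E^*\Big\{\sup_{\psi\in\Psi}|M^W_{1,n}(\psi)|^\nu\Big\}\le A\,g^\alpha(1,n);$$ one may take $A=\big(1-Q^{\alpha/\nu}/2^{(\alpha-1)/\nu}\big)^{-\nu}$.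
   Context: $\ell^\infty(\Psi)$ is the space of bounded real functions on $\Psi$. $\mathrm E^*$ denotes outer expectation: $\mathrm E^*\{Y\}=\inf\{\mathrm E\{U\}:U\ge Y,\ U:\Omega\to[-\infty,\infty]\text{ measurable},\ \mathrm E\{U\}\text{ exists}\}$. *)

From HB Require Import structures.
From mathcomp Require Import all_boot all_order all_algebra.
From mathcomp Require Import all_classical all_reals all_analysis.
From mathcomp Require Import measurable_realfun lebesgue_integral probability.
Set Implicit Arguments. Unset Strict Implicit. Unset Printing Implicit Defensive.
Import Order.TTheory GRing.Theory Num.Theory.
Local Open Scope classical_set_scope.
Local Open Scope ring_scope.

Definition outer_expectation d (T : measurableType d) (R : realType)
  (P : probability T R) (Y : T -> \bar R) : \bar R :=
  ereal_inf [set (\int[P]_x U x)%E | U in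
    [set U : T -> \bar R | [/\ measurable_fun setT U,
       (forall x, (Y x <= U x)%E) &
       ((\int[P]_x (U^\+ x) < +oo)%E \/ (\int[P]_x (U^\- x) < +oo)%E)]]].

Definition partial_sum (R : realType) (T Psi : Type) (W : nat -> T -> Psi -> R)
  (i j : nat) (w : T) (psi : Psi) : R :=
  \sum_(i <= k < j.+1) W k w psi.

Definition max_partial_sum (R : realType) (T Psi : Type) (W : nat -> T -> Psi -> R)
  (i j : nat) (w : T) (psi : Psi) : R :=
  \big[Num.max/0]_(i <= k < j.+1) `|partial_sum W i k w psi|.

From HB Require Import structures.
From mathcomp Require Import all_boot all_order all_algebra.
From mathcomp Require Import all_classical all_reals all_analysis.
From mathcomp Require Import measurable_realfun lebesgue_integral probability.
From mathcomp Require Import ring lra zify.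
Import Order.TTheory GRing.Theory Num.Theory.
Local Open Scope classical_set_scope.
Local Open Scope ring_scope.
Set Implicit Arguments. Unset Strict Implicit. Unset Printing Implicit Defensive.

(* Split [i, j] at the least m with g(i, m) > Q g(i, j) / 2 (or at m = j): then
   g(i, m - 1) <= Q g(i, j) / 2, and by (iii') also g(m + 1, j) <= Q g(i, j) / 2.
   Pathwise M_{i,j} <= max(M_{i,m-1}, |S_{i,m}| + M_{m+1,j}), and the convexity bound
   (x + y)^nu <= l^(1-nu) x^nu + (1-l)^(1-nu) y^nu makes the nu-th power of the right-hand
   side at most a linear combination of |S_{i,m}|^nu, M_{i,m-1}^nu and M_{m+1,j}^nu.
   Outer expectation is monotone and sublinear on nonnegative functions, so induction on
   j - i gives E* sup M_{i,j}^nu <= A g(i,j)^alpha, provided A = (1 - kappa)^(-nu) solves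
   the recursion for l = 1 - kappa; this forces kappa^nu = 2 (Q/2)^alpha, and kappa < 1
   is exactly Q < 2^((alpha-1)/alpha). *)

Section PowerInequalities.
Variable R : realType.
Implicit Types nu l x y u v w : R.

Lemma ler_powR_nneg nu x y : 0 <= nu -> 0 <= x -> x <= y -> x `^ nu <= y `^ nu.
Proof. by move=> nu0 x0 xy; apply: ge0_ler_powR; rewrite ?nnegrE // (le_trans x0). Qed.

Lemma mulr_powR_div nu x y : 0 < x -> 0 <= y ->
  x * (y / x) `^ nu = x `^ (1 - nu) * y `^ nu.
Proof.
move=> x0 y0; rewrite powRM ?invr_ge0 ?(ltW x0) // -powR_inv1 ?(ltW x0) // -powRrM.
rewrite mulrCA mulrC; congr (_ * _).
rewrite -{1}(powRr1 (ltW x0)) -powRD; last by apply/implyP => _; rewrite gt_eqF.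
by rewrite mulN1r.
Qed.

Lemma powRD_le_weighted nu l x y : 1 <= nu -> 0 < l < 1 -> 0 <= x -> 0 <= y ->
  (x + y) `^ nu <= l `^ (1 - nu) * x `^ nu + (1 - l) `^ (1 - nu) * y `^ nu.
Proof.
move=> nu1 /andP[l0 l1] x0 y0.
have l'0 : 0 < 1 - l by rewrite subr_gt0.
have -> : x + y = l * (x / l) + (1 - l) * (y / (1 - l)).
  by rewrite [l * _]mulrC [(1 - l) * _]mulrC !divfK ?gt_eqF.
have xl : x / l \in `[0, +oo[%classic.
  by apply/mem_set; rewrite /= in_itv /= andbT divr_ge0 // ltW.
have yl : y / (1 - l) \in `[0, +oo[%classic.
  by apply/mem_set; rewrite /= in_itv /= andbT divr_ge0 // ltW.
have := convex_powR nu1 (Itv01 (ltW l0) (ltW l1)) xl yl.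
by rewrite !convRE /= !mulr_powR_div.
Qed.

Lemma powR_le_max_split nu l x u v w : 1 <= nu -> 0 < l < 1 ->
  0 <= x -> 0 <= u -> 0 <= v -> 0 <= w -> x <= Num.max u (v + w) ->
  x `^ nu <= l `^ (1 - nu) * v `^ nu + (1 - l) `^ (1 - nu) * (u `^ nu + w `^ nu).
Proof.
move=> nu1 /[dup] l01 /andP[l0 l1] x0 u0 v0 w0.
have nu0 : 0 <= nu by lra.
have b1 : 1 <= (1 - l) `^ (1 - nu).
  by rewrite -[X in X <= _](powRr0 (1 - l)) ger_powR //; lra.
have ge0 y : 0 <= y `^ nu by exact: powR_ge0.
have a0 : 0 <= l `^ (1 - nu) by exact: powR_ge0.
have un := ge0 u; have vn := ge0 v; have wn := ge0 w.
rewrite le_max => /orP[xu|xvw].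
  have := ler_powR_nneg nu0 x0 xu.
  by nra.
have := ler_powR_nneg nu0 x0 xvw.
have := powRD_le_weighted nu1 l01 v0 w0.
by nra.
Qed.

End PowerInequalities.

Section PartialSums.
Variables (R : realType) (T Psi : Type) (W : nat -> T -> Psi -> R).
Variables (w : T) (psi : Psi).
Local Notation S i j := (partial_sum W i j w psi).
Local Notation M i j := (max_partial_sum W i j w psi).

Lemma max_partial_sum_ge0 i j : 0 <= M i j.
Proof. by apply: (big_ind (fun x => 0 <= x)) => // x y x0 y0; rewrite le_max x0. Qed.

Lemma max_partial_sum_empty i j : (j < i)%N -> M i j = 0.
Proof. by move=> ji; rewrite /max_partial_sum big_geq. Qed.

Lemma partial_sum_cat i m k : (i <= m.+1)%N -> (m <= k)%N -> S i k = S i m + S m.+1 k.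
Proof. by move=> im mk; rewrite /partial_sum (big_cat_nat (n := m.+1)). Qed.

Lemma le_max_partial_sum i k j : (i <= k.+1)%N -> (k <= j)%N -> `|S i k| <= M i j.
Proof.
move=> ik kj; have [ki|ik'] := ltnP k i.
  by rewrite /partial_sum big_geq // normr0 max_partial_sum_ge0.
apply: (le_bigmax_seq 0 k xpredT (fun k => `|S i k|)) => //.
by rewrite mem_index_iota ik' ltnS.
Qed.

Lemma max_partial_sum_le i j x : 0 <= x ->
  (forall k, (i <= k <= j)%N -> `|S i k| <= x) -> M i j <= x.
Proof.
move=> x0 Sx; rewrite /max_partial_sum big_seq_cond; apply: bigmax_le => // k.
by rewrite mem_index_iota ltnS andbT; exact: Sx.
Qed.

(* [1 <= i] makes [m.-1] the true predecessor of [m]; for [m = i] the range [i, m.-1] is empty. *)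
Lemma max_partial_sum_split i m j : (1 <= i)%N -> (i <= m <= j)%N ->
  M i j <= Num.max (M i m.-1) (`|S i m| + M m.+1 j).
Proof.
move=> i1 /andP[im mj].
apply: max_partial_sum_le => [|k /andP[ik kj]].
  by rewrite le_max max_partial_sum_ge0.
rewrite le_max; have [km|mk] := ltnP k m.
  by rewrite le_max_partial_sum //; lia.
rewrite (partial_sum_cat (m := m)) //; last by lia.
apply/orP; right; apply: (le_trans (ler_normD _ _)).
by rewrite lerD2l le_max_partial_sum.
Qed.

End PartialSums.

Section OuterExpectation.
Context d (T : measurableType d) (R : realType) (P : probability T R).
Local Open Scope ereal_scope.

Lemma outer_expectation_le_integral (Y U : T -> \bar R) : measurable_fun setT U ->
  (forall x, Y x <= U x) -> (forall x, 0 <= U x) ->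
  outer_expectation P Y <= \int[P]_x U x.
Proof.
move=> mU YU U0; apply: ereal_inf_lbound; exists U => //; split => //; right.
rewrite (eq_integral (cst 0)); first by rewrite integral0 ltry.
by apply: ge0_funenegE => x _; exact: U0.
Qed.

Lemma outer_expectation_lt (Y : T -> \bar R) (r : \bar R) : (forall x, 0 <= Y x) ->
  outer_expectation P Y < r ->
  exists U : T -> \bar R, [/\ measurable_fun setT U, (forall x, Y x <= U x),
    (forall x, 0 <= U x) & \int[P]_x U x < r].
Proof.
move=> Y0 /ereal_inf_lt[_ [U [mU YU _] <-] Ur].
by exists U; split => // x; exact: le_trans (Y0 x) (YU x).
Qed.

Lemma outer_expectation_le_lincomb (Z Y1 Y2 : T -> \bar R) (a b r1 r2 : R) :
  (0 < a)%R -> (0 < b)%R -> (forall x, 0 <= Y1 x) -> (forall x, 0 <= Y2 x) ->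
  (forall x, Z x <= a%:E * Y1 x + b%:E * Y2 x) ->
  outer_expectation P Y1 <= r1%:E -> outer_expectation P Y2 <= r2%:E ->
  outer_expectation P Z <= (a * r1 + b * r2)%:E.
Proof.
move=> a0 b0 Y10 Y20 ZY h1 h2; apply/lee_addgt0Pr => e e0.
have e'0 : (0 < e / (a + b))%R by rewrite divr_gt0 ?addr_gt0.
have lt_e (Y : T -> \bar R) r : outer_expectation P Y <= r%:E ->
    outer_expectation P Y < (r + e / (a + b))%:E.
  by move=> /le_lt_trans; apply; rewrite lte_fin ltrDl.
have [U1 [mU1 YU1 U10 iU1]] := outer_expectation_lt Y10 (lt_e _ _ h1).
have [U2 [mU2 YU2 U20 iU2]] := outer_expectation_lt Y20 (lt_e _ _ h2).
have a0' : 0 <= a%:E by rewrite lee_fin ltW.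
have b0' : 0 <= b%:E by rewrite lee_fin ltW.
have aU10 x : 0 <= a%:E * U1 x by rewrite mule_ge0.
have bU20 x : 0 <= b%:E * U2 x by rewrite mule_ge0.
apply: le_trans (outer_expectation_le_integral (U := fun x => a%:E * U1 x + b%:E * U2 x) _ _ _) _.
- by apply: emeasurable_funD; exact: measurable_funeM.
- by move=> x; rewrite (le_trans (ZY x)) // leeD // lee_wpmul2l.
- by move=> x; rewrite adde_ge0.
rewrite ge0_integralD //; try exact: measurable_funeM.
rewrite !ge0_integralZl //.
apply: le_trans (leeD (lee_wpmul2l a0' (ltW iU1)) (lee_wpmul2l b0' (ltW iU2))) _.
rewrite -!EFinM -!EFinD lee_fin le_eqVlt; apply/orP; left; apply/eqP.
by field; rewrite gt_eqF ?addr_gt0.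
Qed.

End OuterExpectation.

Definition esup_norm_powR (R : realType) (Psi : Type) (nu : R) (f : Psi -> R) : \bar R :=
  ereal_sup [set (`|f psi| `^ nu)%:E | psi in [set: Psi]].

Section SupremumOverPsi.
Variables (R : realType) (Psi : Type) (nu : R).
Local Notation esup := (esup_norm_powR nu).
Local Open Scope ereal_scope.

Lemma esup_norm_powR_ge0 (psi0 : Psi) (f : Psi -> R) : 0 <= esup f.
Proof.
apply: (le_trans _ (ereal_sup_ubound _)); last by exists psi0.
by rewrite lee_fin powR_ge0.
Qed.

Lemma esup_norm_powR_le_lincomb (f s t u : Psi -> R) (a b : R) : (0 <= a)%R -> (0 <= b)%R ->
  (forall psi, `|f psi| `^ nu <= a * `|s psi| `^ nu + b * (`|t psi| `^ nu + `|u psi| `^ nu))%R ->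
  esup f <= a%:E * esup s + b%:E * (esup t + esup u).
Proof.
move=> a0 b0 fstu; apply: ge_ereal_sup => _ [psi _ <-].
have ub (h : Psi -> R) : (`|h psi| `^ nu)%:E <= esup h.
  by apply: ereal_sup_ubound; exists psi.
apply: le_trans (_ : a%:E * (`|s psi| `^ nu)%:E +
  b%:E * ((`|t psi| `^ nu)%:E + (`|u psi| `^ nu)%:E) <= _).
  by rewrite -!EFinM -!EFinD lee_fin.
by rewrite leeD ?lee_wpmul2l ?leeD ?lee_fin ?ub.
Qed.

End SupremumOverPsi.

Lemma exists_balanced_split (R : realType) (h h' : nat -> R) (i j : nat) (c : R) :
  (i <= j)%N -> (forall m, (i <= m < j)%N -> h m + h' m <= 2 * c) ->
  exists m, [/\ (i <= m <= j)%N, ((i < m)%N -> h m.-1 <= c) & ((m < j)%N -> h' m <= c)].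
Proof.
move=> ij hh'.
have [exc|nexc] := pselect (exists m, (i <= m <= j)%N && (c < h m)).
  case: (ex_minnP exc) => m /andP[/andP[im mj] cm] minm.
  exists m; split => [|im'|mj']; first by rewrite im mj.
    rewrite leNgt; apply/negP => cm'.
    have : (m <= m.-1)%N by apply: minm; rewrite cm' andbT; lia.
    lia.
  by have := hh' m; rewrite im mj' => /(_ isT); lra.
exists j; rewrite ij leqnn ltnn; split => // ij'.
by rewrite leNgt; apply/negP => cj; apply: nexc; exists j.-1; rewrite cj andbT; lia.
Qed.

Section Constants.
Variables (R : realType) (alpha nu Q : R).

Definition moricz_kappa : R := Q `^ (alpha / nu) / 2 `^ ((alpha - 1) / nu).

Definition moricz_constant : R := (1 - moricz_kappa) `^ (- nu).

Hypotheses (alpha_gt0 : 0 < alpha) (nu_gt0 : 0 < nu) (Q_gt0 : 0 < Q).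

Lemma moricz_kappa_gt0 : 0 < moricz_kappa.
Proof. by rewrite divr_gt0 // powR_gt0. Qed.

Lemma moricz_kappa_lt1 : Q < 2 `^ ((alpha - 1) / alpha) -> moricz_kappa < 1.
Proof.
move=> Qlt; rewrite ltr_pdivrMr ?powR_gt0 // mul1r.
have -> : 2 `^ ((alpha - 1) / nu) = (2 `^ ((alpha - 1) / alpha)) `^ (alpha / nu).
  by rewrite -powRrM; congr (_ `^ _); field; rewrite !gt_eqF.
by apply: gt0_ltr_powR; rewrite ?divr_gt0 ?nnegrE ?powR_ge0 ?ltW.
Qed.

Lemma moricz_kappa_powR : moricz_kappa `^ nu = 2 * Q `^ alpha / 2 `^ alpha.
Proof.
rewrite powRM ?powR_ge0 ?invr_ge0 // -(powR_inv1 (powR_ge0 _ _)) -!powRrM.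
rewrite mulN1r mulrN !divfK ?gt_eqF // powRN powRB ?pnatr_eq0 ?implybT // powRr1 //.
by rewrite invf_div mulrCA mulrA.
Qed.

(* [moricz_constant] is the fixed point of the recursion of the induction step, with
   weight [1 - moricz_kappa] on the partial sum and [moricz_kappa] on the two halves. *)
Lemma moricz_constant_step G : 0 <= G -> moricz_kappa < 1 ->
  (1 - moricz_kappa) `^ (1 - nu) * G `^ alpha +
  (1 - (1 - moricz_kappa)) `^ (1 - nu) *
    (moricz_constant * (Q * G / 2) `^ alpha + moricz_constant * (Q * G / 2) `^ alpha)
  = moricz_constant * G `^ alpha.
Proof.
move=> G0 kap1; set kap := moricz_kappa; set A := moricz_constant.
have kap0 := moricz_kappa_gt0.
have -> : 1 - (1 - kap) = kap by ring.
have kap1' : 0 < 1 - kap by rewrite subr_gt0.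
have A1 : (1 - kap) `^ (1 - nu) = (1 - kap) * A.
  by rewrite powRD ?(gt_eqF kap1') ?implybT // powRr1 // ltW.
have K : kap `^ (1 - nu) = kap / kap `^ nu.
  by rewrite powRB ?(gt_eqF kap0) ?implybT // powRr1 // ltW.
have QG : (Q * G / 2) `^ alpha = Q `^ alpha * G `^ alpha / 2 `^ alpha.
  rewrite !powRM ?mulr_ge0 ?invr_ge0 ?(ltW Q_gt0) //.
  by rewrite -(powR_inv1 (ler0n _ 2)) -powRrM mulN1r powRN.
rewrite A1 QG K moricz_kappa_powR; field.
by rewrite !gt_eqF ?powR_gt0.
Qed.

End Constants.

Section MaximalInequality.
Context d (T : measurableType d) (R : realType) (P : probability T R).
Variables (Psi : Type) (psi0 : Psi) (W : nat -> T -> Psi -> R).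
Variables (nu alpha Q : R) (n : nat) (g : nat -> nat -> R).
Hypotheses (nu_ge1 : 1 <= nu) (alpha_gt1 : 1 < alpha).
Hypotheses (Q_ge1 : 1 <= Q) (Q_lt : Q < 2 `^ ((alpha - 1) / alpha)).
Hypothesis g_ge0 : forall i j, (1 <= i)%N -> (i <= j)%N -> (j <= n)%N -> 0 <= g i j.
Hypothesis g_nondecr :
  forall i j, (1 <= i)%N -> (i <= j)%N -> (j <= n - 1)%N -> g i j <= g i j.+1.
Hypothesis g_split : forall i j k, (1 <= i)%N -> (i <= j)%N -> (j < k)%N -> (k <= n)%N ->
  g i j + g j.+1 k <= Q * g i k.
Hypothesis partial_sum_moment : forall i j, (1 <= i)%N -> (i <= j)%N -> (j <= n)%N ->
  (outer_expectation P (fun w => esup_norm_powR nu (partial_sum W i j w))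
   <= (g i j `^ alpha)%:E)%E.

Local Notation Emax i j :=
  (outer_expectation P (fun w => esup_norm_powR nu (max_partial_sum W i j w))).
Local Notation kap := (moricz_kappa alpha nu Q).
Local Notation A := (moricz_constant alpha nu Q).

Lemma g_nondecreasing i m j : (1 <= i)%N -> (i <= m <= j)%N -> (j <= n)%N -> g i m <= g i j.
Proof.
move=> i1 /andP[im]; elim: j => [|j IH]; first by rewrite leqn0 => /eqP->.
rewrite leq_eqVlt ltnS => /predU1P[->//|mj] jn.
apply: le_trans (IH mj (ltnW jn)) (g_nondecr i1 (leq_trans im mj) _).
by rewrite leq_subRL ?add1n // (leq_ltn_trans (leq0n j) jn).
Qed.

Lemma outer_expectation_max_partial_sum_empty i j : (j < i)%N -> (Emax i j <= 0)%E.
Proof.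
move=> ji; rewrite -(integral0 P setT); apply: outer_expectation_le_integral => // w.
apply: ge_ereal_sup => _ [psi _ <-].
by rewrite max_partial_sum_empty // normr0 powR0 // gt_eqF // (lt_le_trans ltr01).
Qed.

Lemma esup_max_partial_sum_split l i m j w : 0 < l < 1 -> (1 <= i)%N -> (i <= m <= j)%N ->
  (esup_norm_powR nu (max_partial_sum W i j w) <=
   (l `^ (1 - nu))%:E * esup_norm_powR nu (partial_sum W i m w) +
   ((1 - l) `^ (1 - nu))%:E *
     (esup_norm_powR nu (max_partial_sum W i m.-1 w) +
      esup_norm_powR nu (max_partial_sum W m.+1 j w)))%E.
Proof.
move=> l01 i1 imj; apply: esup_norm_powR_le_lincomb; rewrite ?powR_ge0 // => psi.
rewrite !(@ger0_norm _ (max_partial_sum W _ _ w psi)) ?max_partial_sum_ge0 //.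
apply: powR_le_max_split; rewrite ?max_partial_sum_ge0 ?normr_ge0 //.
exact: max_partial_sum_split.
Qed.

Lemma outer_expectation_max_partial_sum_step i m j G : (1 <= i)%N -> (i <= m <= j)%N ->
  0 <= G ->
  (outer_expectation P (fun w => esup_norm_powR nu (partial_sum W i m w))
    <= (G `^ alpha)%:E)%E ->
  (Emax i m.-1 <= (A * (Q * G / 2) `^ alpha)%:E)%E ->
  (Emax m.+1 j <= (A * (Q * G / 2) `^ alpha)%:E)%E ->
  (Emax i j <= (A * G `^ alpha)%:E)%E.
Proof.
move=> i1 imj G0 sum_bound left_bound right_bound.
have nu_gt0 : 0 < nu := lt_le_trans ltr01 nu_ge1.
have Q_gt0 : 0 < Q := lt_le_trans ltr01 Q_ge1.
have kap_gt0 : 0 < kap := moricz_kappa_gt0 alpha nu Q_gt0.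
have kap_lt1 : kap < 1 := moricz_kappa_lt1 (lt_trans ltr01 alpha_gt1) nu_gt0 Q_gt0 Q_lt.
have kap01 : 0 < 1 - kap < 1 by rewrite subr_gt0 gtrBl kap_gt0 kap_lt1.
rewrite -(moricz_constant_step nu_gt0 Q_gt0 G0 kap_lt1).
apply: (outer_expectation_le_lincomb _ _ _ _
  (fun w => esup_max_partial_sum_split w kap01 i1 imj) sum_bound).
- by rewrite powR_gt0 // subr_gt0.
- by rewrite powR_gt0 // subKr.
- by move=> w; exact: esup_norm_powR_ge0.
- by move=> w; rewrite adde_ge0 ?esup_norm_powR_ge0.
apply: le_trans (outer_expectation_le_lincomb ltr01 ltr01 _ _ _ left_bound right_bound) _.
- by move=> w; exact: esup_norm_powR_ge0.
- by move=> w; exact: esup_norm_powR_ge0.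
- by move=> w; rewrite !mul1e.
- by rewrite !mul1r.
Qed.

Lemma outer_expectation_max_partial_sum i j : (1 <= i)%N -> (i <= j)%N -> (j <= n)%N ->
  (Emax i j <= (A * g i j `^ alpha)%:E)%E.
Proof.
have alpha_ge0 : 0 <= alpha := ltW (lt_trans ltr01 alpha_gt1).
have [k] := ubnP (j - i); elim: k => // k IH in i j *; rewrite ltnS => jik i1 ij jn.
have half c i' j' : (1 <= i')%N -> (j' <= n)%N -> (j'.+1 - i' <= j - i)%N ->
    ((i' <= j')%N -> g i' j' <= c) -> (Emax i' j' <= (A * c `^ alpha)%:E)%E.
  move=> i'1 j'n shorter gc; have [j'i'|i'j'] := ltnP j' i'.
    apply: le_trans (outer_expectation_max_partial_sum_empty j'i') _.
    by rewrite lee_fin mulr_ge0 ?powR_ge0.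
  apply: le_trans (IH i' j' _ i'1 i'j' j'n) _; first lia.
  by rewrite lee_fin; apply/ler_wpM2l/ler_powR_nneg; rewrite ?gc ?powR_ge0 ?g_ge0.
have [m [imj left_small right_small]] : exists m, [/\ (i <= m <= j)%N,
    ((i < m)%N -> g i m.-1 <= Q * g i j / 2) & ((m < j)%N -> g m.+1 j <= Q * g i j / 2)].
  apply: exists_balanced_split => // m /andP[im mj].
  by rewrite mulrCA divff ?mulr1 ?g_split // pnatr_eq0.
have /andP[im mj] := imj.
have m_gt0 : (0 < m)%N := leq_trans i1 im.
apply: (outer_expectation_max_partial_sum_step i1 imj (g_ge0 i1 ij jn)).
- apply: le_trans (partial_sum_moment i1 im (leq_trans mj jn)) _.
  by rewrite lee_fin ler_powR_nneg ?g_nondecreasing ?g_ge0 // (leq_trans mj jn).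
- apply: half => //; first exact: leq_trans (leq_pred m) (leq_trans mj jn).
    by rewrite prednK // leq_sub2r.
  by move=> im'; apply: left_small; rewrite -(prednK m_gt0) ltnS.
- by apply: half => //; rewrite subSS leq_sub2l.
Qed.

End MaximalInequality.

Theorem proposition7p3 (d : measure_display) (T : measurableType d) (R : realType)
  (P : probability T R) (Psi : Type) (nu : R) (n : nat)
  (W : nat -> T -> Psi -> R) (alpha Q : R) (g : nat -> nat -> R) :
  1 <= nu ->
  (exists psi0 : Psi, True) ->
  (1 <= n)%N ->
  (* each W_k(omega) is an element of l^oo(Psi) *)
  (forall k w, (1 <= k <= n)%N -> exists B : R, forall psi, `|W k w psi| <= B) ->
  1 < alpha ->
  (forall i j, (1 <= i)%N -> (i <= j)%N -> (j <= n)%N ->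
     (outer_expectation P (fun w =>
        ereal_sup [set ((`|partial_sum W i j w psi|) `^ nu)%:E | psi in [set: Psi]])
      <= ((g i j) `^ alpha)%:E)%E) ->
  (forall i j, (1 <= i <= n)%N -> (1 <= j <= n)%N -> 0 <= g i j) ->
  (forall i j, (1 <= i)%N -> (i <= j)%N -> (j <= n - 1)%N -> g i j <= g i j.+1) ->
  (forall i j k, (1 <= i)%N -> (i <= j)%N -> (j < k)%N -> (k <= n)%N ->
     g i j + g j.+1 k <= Q * g i k) ->
  1 <= Q -> Q < 2 `^ ((alpha - 1) / alpha) ->
  (outer_expectation P (fun w =>
      ereal_sup [set ((`|max_partial_sum W 1 n w psi|) `^ nu)%:E | psi in [set: Psi]])
   <= (((1 - Q `^ (alpha / nu) / 2 `^ ((alpha - 1) / nu)) `^ (- nu))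
        * (g 1%N n) `^ alpha)%:E)%E.
Proof.
move=> nu1 [psi0 _] n1 _ alpha1 moment g_ge0 g_nondecr g_split Q1 Qlt.
apply: (outer_expectation_max_partial_sum psi0 nu1 alpha1 Q1 Qlt _ g_nondecr g_split moment
  (leqnn 1) n1 (leqnn n)).
by move=> i j i1 ij jn; apply: g_ge0; lia.
Qed.
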